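(* The language $\mathtt{containment}$ is $\mathrm{NLD}(O(1))$-complete: $\mathtt{containment}\in\mathrm{NLD}(O(1))$, and every $\mathcal{L}\in\mathrm{NLD}(O(1))$ satisfies $\mathcal{L}\preceq\mathtt{containment}$.
   Context: Configurations are pairs $(G,\mathbf{x})$ with $G$ a finite connected graph and $\mathbf{x}:V(G)\to\{0,1\}^*$. A distributed language is a decidable set of configurations. Model: synchronous LOCAL model. Nodes have distinct identities (injective $\mathrm{Id}:V(G)\to\mathbb{N}$) and unbounded messages, and after $r$ rounds a node knows exactly its radius-$r$ ball (identities, inputs, certificates, adjacencies). $\mathtt{containment}$: each node's input encodes a pair $(\mathcal{E}(v),\mathcal{S}(v))$, where $\mathcal{E}(v)\in\{0,1\}^*$ and $\mathcal{S}(v)$ is a finite collection of finite sets of binary strings. Then $\mathtt{containment}=\{(G,(\mathcal{E},\mathcal{S})): \exists v\in V(G)\ \exists S\in\mathcal{S}(v)\ \text{with}\ S\supseteq\{\mathcal{E}(u):u\in V(G)\}\}$. Local reduction: $\mathcal{L}_1\preceq\mathcal{L}_2$ if there is a constant-time deterministic local algorithm which, for every configuration $(G,\mathbf{x})$ and every identity assignment, produces outputs $\mathrm{out}(v)\in\{0,1\}^*$ with $(G,\mathbf{x})\in\mathcal{L}_1\iff(G,\mathrm{out})\in\mathcal{L}_2$. $\mathrm{NLD}(t)$ is the class of languages $\mathcal{L}$ verifiable in time $t$ by a deterministic algorithm that also receives node certificates $\mathbf{y}:V(G)\to\{0,1\}^*$, such that: - for every $(G,\mathbf{x})\in\mathcal{L}$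 some certificate depending only on $(G,\mathbf{x})$ makes all nodes output ''yes'' under every identity assignment; - for every $(G,\mathbf{x})\notin\mathcal{L}$, every certificate and every identity assignment, some node outputs ''no''. $\mathrm{NLD}(O(1))=\bigcup_{c\in\mathbb{N}}\mathrm{NLD}(c)$. *)

From HB Require Import structures.
From mathcomp Require Import all_boot.
Unset Printing Implicit Defensive.

Record graph := Graph { gn : nat; gadj : 'I_gn -> 'I_gn -> bool }.
Arguments gadj : clear implicits.

Definition is_graph (G : graph) : Prop :=
  [/\ 0 < gn G, irreflexive (gadj G), symmetric (gadj G)
    & forall u v : 'I_(gn G), connect (gadj G) u v].

Fixpoint ball (G : graph) (r : nat) (v : 'I_(gn G)) : {set 'I_(gn G)} :=
  match r with
  | 0 => [set v]
  | r'.+1 => let B := ball G r' v in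
             B :|: [set u | [exists w in B, gadj G w u]]
  end.

Definition same_view (L : Type) (r : nat)
    (G1 : graph) (id1 : 'I_(gn G1) -> nat) (l1 : 'I_(gn G1) -> L) (v1 : 'I_(gn G1))
    (G2 : graph) (id2 : 'I_(gn G2) -> nat) (l2 : 'I_(gn G2) -> L) (v2 : 'I_(gn G2)) : Prop :=
  exists f : 'I_(gn G1) -> 'I_(gn G2),
    [/\ f v1 = v2,
        forall u, u \in ball G1 r v1 ->
          [/\ f u \in ball G2 r v2, id2 (f u) = id1 u & l2 (f u) = l1 u],
        forall u2, u2 \in ball G2 r v2 -> exists2 u, u \in ball G1 r v1 & f u = u2
      & forall u w, u \in ball G1 r v1 -> w \in ball G1 r v1 ->
          gadj G2 (f u) (f w) = gadj G1 u w].

Definition algo (L O : Type) :=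
  forall G : graph, ('I_(gn G) -> nat) -> ('I_(gn G) -> L) -> 'I_(gn G) -> O.

(** The algorithm runs in r rounds in the LOCAL model: a node's output only
    depends on its radius-r view (on connected graphs with distinct ids). *)
Definition local (L O : Type) (r : nat) (A : algo L O) : Prop :=
  forall (G1 : graph) (id1 : 'I_(gn G1) -> nat) (l1 : 'I_(gn G1) -> L) (v1 : 'I_(gn G1))
         (G2 : graph) (id2 : 'I_(gn G2) -> nat) (l2 : 'I_(gn G2) -> L) (v2 : 'I_(gn G2)),
    is_graph G1 -> is_graph G2 -> injective id1 -> injective id2 ->
    same_view L r G1 id1 l1 v1 G2 id2 l2 v2 ->
    A G1 id1 l1 v1 = A G2 id2 l2 v2.

(** Configurations with inputs of type X (X = seq bool for binary strings). *)
Record config (X : Type) := Config { cgraph : graph; cinput : 'I_(gn cgraph) -> X }.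
Arguments cinput {X}.
Arguments cgraph {X}.

Definition language (X : Type) := config X -> bool.

Definition NLD (X : Type) (t : nat) (Lg : language X) : Prop :=
  exists A : algo (X * seq bool) bool,
    [/\ local (X * seq bool) bool t A,
        forall C : config X, is_graph (cgraph C) -> Lg C ->
          exists y : 'I_(gn (cgraph C)) -> seq bool,
            forall id : 'I_(gn (cgraph C)) -> nat, injective id ->
              forall v, A (cgraph C) id (fun u => (cinput C u, y u)) v = true
      & forall C : config X, is_graph (cgraph C) -> Lg C = false ->
          forall (y : 'I_(gn (cgraph C)) -> seq bool) (id : 'I_(gn (cgraph C)) -> nat),
            injective id ->
            exists v, A (cgraph C) id (fun u => (cinput C u, y u)) v = false].

Definition NLD_O1 {X : Type} (Lg : language X) : Prop := exists c, NLD X c Lg.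

Definition local_reduction {X1 X2 : Type} (L1 : language X1) (L2 : language X2) : Prop :=
  exists (c : nat) (A : algo X1 X2),
    local X1 X2 c A /\
    forall C : config X1, is_graph (cgraph C) ->
      forall id : 'I_(gn (cgraph C)) -> nat, injective id ->
        L1 C = L2 (@Config X2 (cgraph C) (A (cgraph C) id (cinput C))).

(** Inputs of containment: a pair (E(v), S(v)), with finite sets of binary
    strings represented by sequences (membership semantics). *)
Definition cont_input := (seq bool * seq (seq (seq bool)))%type.

Definition containment : language cont_input := fun C =>
  [exists v : 'I_(gn (cgraph C)),
     has (fun S : seq (seq bool) =>
            [forall u : 'I_(gn (cgraph C)), (cinput C u).1 \in S])
         (cinput C v).2].

From HB Require Import structures.
From mathcomp Require Import all_boot.
From Stdlib Require Import FunctionalExtensionality.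

(* Membership: a certificate gives every node a set S and its distance to a node u with
   S in S(u). Each node checks that its own input lies in S, that its neighbours hold the
   same S, and that it has distance 0 with S in its own S(v) or a neighbour of smaller
   distance; on a connected graph this forces a common S containing every input and
   belonging to the S(v) of a distance-minimising node.

   Hardness: given a t-round verifier A for L, every node v outputs as E(v) a code of its
   radius-t view and as S(v) the view sets of all legal configurations with ids and input
   lengths at most W = id(v) + |x(v)|, hence at most W + 1 nodes. A legal configuration is
   found in the S(v) of the node maximising W. Conversely, if one legal configuration C'
   realises all views of C, an accepting certificate of C' pulled back through the
   identities makes A accept everywhere on C, so C is legal by soundness of A. *)

Set Implicit Arguments.
Unset Strict Implicit.

Lemma ball_center G r (v : 'I_(gn G)) : v \in ball G r v.
Proof. by elim: r => [|r IHr] /=; rewrite !inE ?IHr. Qed.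

Lemma mem_ball1 G (v u : 'I_(gn G)) : (u \in ball G 1 v) = (u == v) || gadj G v u.
Proof.
rewrite /= !inE; congr (_ || _); apply/existsP/idP => [[w /andP[]]|vu].
  by rewrite inE => /eqP ->.
by exists v; rewrite inE eqxx.
Qed.

Lemma ball_adj G r (v u w : 'I_(gn G)) :
  u \in ball G r v -> gadj G u w -> w \in ball G r.+1 v.
Proof.
by move=> uB uw; rewrite /= !inE; apply/orP; right; apply/existsP; exists u; rewrite uB.
Qed.

Lemma connect_ball G (v u : 'I_(gn G)) : connect (gadj G) v u -> exists r, u \in ball G r v.
Proof.
have walk p x r : x \in ball G r v -> path (gadj G) x p -> exists r', last x p \in ball G r' v.
  elim: p x r => [|w p IHp] x r xB /=; first by exists r.
  by case/andP=> xw; apply: IHp; apply: ball_adj xB xw.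
by case/connectP=> p vp ->; apply: walk vp; apply: (ball_center 0).
Qed.

Lemma connected_const G (T : eqType) (f : 'I_(gn G) -> T) :
  (forall u w, connect (gadj G) u w) -> (forall u w, gadj G u w -> f u = f w) ->
  forall u w, f u = f w.
Proof.
move=> conn fE u w; have clf : closed (gadj G) [pred z | f z == f u].
  by move=> z z' /fE; rewrite !inE => ->.
by have := closed_connect clf (conn u w); rewrite !inE eqxx => /esym/eqP ->.
Qed.

(* The witness is the graph distance to [v]. *)
Lemma connected_potential G (v : 'I_(gn G)) :
  symmetric (gadj G) -> (forall u, connect (gadj G) v u) ->
  exists d : 'I_(gn G) -> nat, forall u,
    if d u == 0 then u = v else [exists w, gadj G u w && (d w < d u)].
Proof.
move=> sym conn; pose d u := ex_minn (connect_ball (conn u)).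
have dB u : u \in ball G (d u) v by rewrite /d; case: ex_minnP.
have dmin u r : u \in ball G r v -> d u <= r by rewrite /d; case: ex_minnP => m _ /[apply].
exists d => u; move: (dB u); case: (d u) (dmin u) => [|r] dmin_u /=.
  by rewrite inE => /eqP.
rewrite inE => /orP[/dmin_u|]; first by rewrite ltnn.
rewrite inE => /existsP[w /andP[wB wu]]; apply/existsP; exists w.
by rewrite sym wu ltnS dmin.
Qed.

Section SameView.
Variables (L : Type) (r : nat).
Variables (G1 : graph) (id1 : 'I_(gn G1) -> nat) (l1 : 'I_(gn G1) -> L) (v1 : 'I_(gn G1)).
Variables (G2 : graph) (id2 : 'I_(gn G2) -> nat) (l2 : 'I_(gn G2) -> L) (v2 : 'I_(gn G2)).

Lemma same_view_center :
  same_view L r G1 id1 l1 v1 G2 id2 l2 v2 -> id2 v2 = id1 v1 /\ l2 v2 = l1 v1.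
Proof. by case=> f [<- fB _ _]; have [_ -> ->] := fB v1 (ball_center r v1). Qed.

Lemma same_view1_exists (P : L -> bool) : same_view L 1 G1 id1 l1 v1 G2 id2 l2 v2 ->
  [exists w, gadj G1 v1 w && P (l1 w)] = [exists w, gadj G2 v2 w && P (l2 w)].
Proof.
case=> f [fv fB fsurj fadj]; apply/existsP/existsP => -[w /andP[vw Pw]].
  have wB : w \in ball G1 1 v1 by rewrite mem_ball1 vw orbT.
  have [_ _ lw] := fB w wB; exists (f w).
  by rewrite lw -fv fadj ?ball_center ?vw.
have [u uB fu] := fsurj w ltac:(by rewrite mem_ball1 vw orbT).
have [_ _ lu] := fB u uB; exists u.
by rewrite -fadj ?ball_center // fv fu vw -lu fu.
Qed.

Lemma same_view1_forall (P : L -> bool) : same_view L 1 G1 id1 l1 v1 G2 id2 l2 v2 ->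
  [forall w, gadj G1 v1 w ==> P (l1 w)] = [forall w, gadj G2 v2 w ==> P (l2 w)].
Proof.
move=> /(same_view1_exists (predC P)) E; apply/negb_inj; rewrite !negb_forall.
under eq_existsb do rewrite negb_imply.
under [in RHS]eq_existsb do rewrite negb_imply.
exact: E.
Qed.

End SameView.

Definition unary (T : countType) (x : T) : seq bool := nseq (pickle x) true.

Definition ununary (T : countType) (x0 : T) (s : seq bool) : T := odflt x0 (unpickle (size s)).

Lemma unaryK (T : countType) (x0 : T) : cancel (@unary T) (ununary x0).
Proof. by move=> x; rewrite /ununary /unary size_nseq pickleK. Qed.

Lemma unary_inj (T : countType) : injective (@unary T).
Proof. by move=> x y /(congr1 (ununary x)); rewrite !unaryK. Qed.

Definition cont_cert (s : seq bool) : seq (seq bool) * nat := ununary ([::], 0) s.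

Definition cont_verifier : algo (cont_input * seq bool) bool := fun G _ l v =>
  let S := (cont_cert (l v).2).1 in
  let d := (cont_cert (l v).2).2 in
  [&& (l v).1.1 \in S,
      [forall w, gadj G v w ==> ((cont_cert (l w).2).1 == S)] &
      if d == 0 then S \in (l v).1.2
      else [exists w, gadj G v w && ((cont_cert (l w).2).2 < d)]].

Lemma cont_verifier_local : local _ _ 1 cont_verifier.
Proof.
move=> G1 id1 l1 v1 G2 id2 l2 v2 _ _ _ _ SV; rewrite /cont_verifier.
have [_ ->] := same_view_center SV.
rewrite (same_view1_forall (fun z => (cont_cert z.2).1 == _) SV).
by rewrite (same_view1_exists (fun z => (cont_cert z.2).2 < _) SV).
Qed.

Lemma cont_verifier_complete (C : config cont_input) :
  is_graph (cgraph C) -> containment C ->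
  exists y, forall id v, cont_verifier id (fun u => (cinput C u, y u)) v.
Proof.
case: C => G x [_ _ sym conn] /existsP[v /hasP[S Sv /forallP xS]] /=.
have [d dP] := connected_potential (v := v) sym (conn v).
exists (fun u => unary (S, d u)) => id u; rewrite /cont_verifier /cont_cert !unaryK /= xS /=.
apply/andP; split; first by apply/forallP => w; rewrite unaryK eqxx implybT.
move: (dP u); case: eqP => [_ -> //|_ /existsP[w /andP[uw dw]]].
by apply/existsP; exists w; rewrite uw unaryK.
Qed.

Lemma cont_verifier_sound (C : config cont_input) (y : 'I_(gn (cgraph C)) -> seq bool) id :
  is_graph (cgraph C) -> (forall v, cont_verifier id (fun u => (cinput C u, y u)) v) ->
  containment C.
Proof.
case: C y id => G x y id [n_gt0 _ _ conn] /= acc.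
pose S u := (cont_cert (y u)).1; pose d u := (cont_cert (y u)).2.
have accP u := acc u; rewrite /cont_verifier /= in accP.
have S_const u w : S u = S w.
  apply: connected_const conn _ _ _ => {}u {}w uw.
  by case/and3P: (accP u) => _ /forallP/(_ w); rewrite uw => /eqP.
have [v _ vmin] := arg_minnP d (isT : predT (Ordinal n_gt0)).
apply/existsP; exists v; apply/hasP; exists (S v).
  case/and3P: (accP v) => _ _; case: eqP => // _ /existsP[w /andP[_]].
  by rewrite ltnNge vmin.
by apply/forallP => u; case/and3P: (accP u); rewrite -/(S u) (S_const u v).
Qed.

Lemma containment_NLD : NLD_O1 containment.
Proof.
exists 1, cont_verifier; split; first exact: cont_verifier_local.
  by move=> C gC /(cont_verifier_complete gC) [y yP]; exists y => id _; apply: yP.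
move=> C gC notC y id _.
have /existsP[v /negbTE] : [exists v, ~~ cont_verifier id (fun u => (cinput C u, y u)) v].
  rewrite -negb_forall; apply/negP => /forallP acc.
  by rewrite (cont_verifier_sound gC acc) in notC.
by exists v.
Qed.

Lemma sort_leq_uniq_eq (s1 s2 : seq nat) :
  uniq s1 -> uniq s2 -> s1 =i s2 -> sort leq s1 = sort leq s2.
Proof.
move=> u1 u2 /(uniq_perm u1 u2).
by apply/perm_sortP; [apply: leq_total | apply: leq_trans | apply: anti_leq].
Qed.

Section ViewCode.
Variables (G : graph) (t : nat) (id : 'I_(gn G) -> nat) (x : 'I_(gn G) -> seq bool).

Definition nbr_id_seq (v w : 'I_(gn G)) : seq nat :=
  [seq id z | z <- enum (ball G t v) & gadj G w z].

Definition nbr_ids (v w : 'I_(gn G)) : seq nat := sort leq (nbr_id_seq v w).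

Definition view_item (v w : 'I_(gn G)) := (id w, (x w, nbr_ids v w)).

(* Sorting makes the code independent of the vertex names of [G]: only identities, inputs
   and adjacencies inside the ball remain. *)
Definition view_code (v : 'I_(gn G)) : nat * seq nat :=
  (id v, sort leq [seq pickle (view_item v w) | w <- enum (ball G t v)]).

Hypothesis id_inj : injective id.

Lemma uniq_nbr_id_seq (v w : 'I_(gn G)) : uniq (nbr_id_seq v w).
Proof. by rewrite (map_inj_uniq id_inj) filter_uniq ?enum_uniq. Qed.

Lemma mem_nbr_ids (v w z : 'I_(gn G)) :
  z \in ball G t v -> (id z \in nbr_ids v w) = gadj G w z.
Proof.
move=> zB; rewrite mem_sort; apply/mapP/idP => [[z']|wz].
  by rewrite mem_filter => /andP[wz' _] /id_inj ->.
by exists z; rewrite // mem_filter wz mem_enum.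
Qed.

Lemma uniq_view_items (v : 'I_(gn G)) :
  uniq [seq pickle (view_item v w) | w <- enum (ball G t v)].
Proof.
by rewrite (map_inj_uniq _) ?enum_uniq // => w w' /(pcan_inj pickleK) [/id_inj].
Qed.

End ViewCode.

Lemma view_code_item t G1 (id1 : 'I_(gn G1) -> nat) x1 v1
    G2 (id2 : 'I_(gn G2) -> nat) x2 v2 w1 :
  view_code t id1 x1 v1 = view_code t id2 x2 v2 -> w1 \in ball G1 t v1 ->
  exists2 w2, w2 \in ball G2 t v2 & view_item t id2 x2 v2 w2 = view_item t id1 x1 v1 w1.
Proof.
case=> _ codeE w1B; pose code1 w := pickle (view_item t id1 x1 v1 w).
have : code1 w1 \in sort leq [seq code1 w | w <- enum (ball G1 t v1)].
  by rewrite mem_sort map_f ?mem_enum.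
rewrite codeE mem_sort => /mapP[w2]; rewrite mem_enum => w2B /(pcan_inj pickleK) itemE.
by exists w2.
Qed.

Section ViewCodeTransfer.
Variables (t : nat).
Variables (G1 : graph) (id1 : 'I_(gn G1) -> nat) (x1 : 'I_(gn G1) -> seq bool) (v1 : 'I_(gn G1)).
Variables (G2 : graph) (id2 : 'I_(gn G2) -> nat) (x2 : 'I_(gn G2) -> seq bool) (v2 : 'I_(gn G2)).
Hypotheses (id1_inj : injective id1) (id2_inj : injective id2).

Lemma same_view_code :
  same_view (seq bool) t G1 id1 x1 v1 G2 id2 x2 v2 ->
  view_code t id1 x1 v1 = view_code t id2 x2 v2.
Proof.
move=> SV; have [idv _] := same_view_center SV; case: SV => f [_ fB fsurj fadj].
have nbrE w : w \in ball G1 t v1 -> nbr_ids t id1 v1 w = nbr_ids t id2 v2 (f w).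
  move=> wB; apply: sort_leq_uniq_eq; rewrite ?uniq_nbr_id_seq // => k.
  apply/mapP/mapP => -[z]; rewrite mem_filter mem_enum => /andP[wz zB] ->.
    have [fzB idz _] := fB z zB.
    by exists (f z); [rewrite mem_filter mem_enum fzB fadj // wz | rewrite idz].
  have [u uB fu] := fsurj z zB; have [_ idu _] := fB u uB.
  by exists u; [rewrite mem_filter mem_enum uB -fadj // fu wz | rewrite -fu idu].
have itemE w : w \in ball G1 t v1 -> view_item t id1 x1 v1 w = view_item t id2 x2 v2 (f w).
  by move=> wB; have [_ idw xw] := fB w wB; rewrite /view_item idw xw nbrE.
rewrite /view_code idv; congr pair; apply: sort_leq_uniq_eq; rewrite ?uniq_view_items // => p.
apply/mapP/mapP => -[w]; rewrite mem_enum => wB ->.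
  by have [fwB _ _] := fB w wB; exists (f w); rewrite ?mem_enum ?itemE.
by have [u uB <-] := fsurj w wB; exists u; rewrite ?mem_enum ?itemE.
Qed.

Lemma same_view_of_code (y2 : 'I_(gn G2) -> seq bool) (g : 'I_(gn G1) -> 'I_(gn G2)) :
  (forall w1 w2, id2 w2 = id1 w1 -> g w1 = w2) ->
  view_code t id1 x1 v1 = view_code t id2 x2 v2 ->
  same_view (seq bool * seq bool) t G1 id1 (fun u => (x1 u, y2 (g u))) v1
                                    G2 id2 (fun u => (x2 u, y2 u)) v2.
Proof.
move=> gE codeE.
have gB w : w \in ball G1 t v1 ->
    g w \in ball G2 t v2 /\ view_item t id2 x2 v2 (g w) = view_item t id1 x1 v1 w.
  move=> wB; have [w2 w2B itemE] := view_code_item codeE wB.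
  by rewrite (gE w w2) //; case: itemE.
exists g; split.
- by apply: gE; case: codeE.
- by move=> u uB; have [guB [-> -> _]] := gB u uB.
- move=> u2 u2B; have [u uB itemE] := view_code_item (esym codeE) u2B.
  by exists u => //; apply: gE; case: itemE.
- move=> u w uB wB; have [_ [_ _ nbrE]] := gB u uB; have [gwB [idE _ _]] := gB w wB.
  by rewrite -(mem_nbr_ids id2_inj _ gwB) idE nbrE mem_nbr_ids.
Qed.

End ViewCodeTransfer.

Definition is_graphb (G : graph) : bool :=
  [&& 0 < gn G, [forall u, ~~ gadj G u u],
      [forall u, forall w, gadj G u w == gadj G w u]
    & [forall u, forall w, connect (gadj G) u w]].

Lemma is_graphP G : reflect (is_graph G) (is_graphb G).
Proof.
apply: (iffP and4P) => [[n_gt0 /forallP irr /forallP sym /forallP conn]|[n_gt0 irr sym conn]].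
  split=> // [u|u w|u w]; first exact/negbTE.
    by have /forallP/(_ w)/eqP := sym u.
  by have /forallP := conn u.
split=> //; apply/forallP => u; first by rewrite irr.
  by apply/forallP => w; rewrite sym.
by apply/forallP.
Qed.

(* Configurations on [m] nodes with identities and input lengths at most [W]. *)
Definition small_config (W m : nat) : finType :=
  ({ffun 'I_m * 'I_m -> bool} * {ffun 'I_m -> 'I_W.+1} * {ffun 'I_m -> W.-bseq bool})%type.

Definition sc_adj W m (b : small_config W m) : 'I_m -> 'I_m -> bool :=
  fun u w => b.1.1 (u, w).
Definition sc_id W m (b : small_config W m) : 'I_m -> nat := fun u => val (b.1.2 u).
Definition sc_input W m (b : small_config W m) : 'I_m -> seq bool := fun u => val (b.2 u).

Lemma small_config_of W m (adj : 'I_m -> 'I_m -> bool) (id : 'I_m -> nat)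
    (x : 'I_m -> seq bool) :
  (forall u, id u <= W) -> (forall u, size (x u) <= W) ->
  exists b : small_config W m, [/\ sc_adj b = adj, sc_id b = id & sc_input b = x].
Proof.
move=> idW xW; pose idW' u : id u < W.+1 := idW u.
exists ([ffun p => adj p.1 p.2], [ffun u => Ordinal (idW' u)], [ffun u => insub_bseq W (x u)]).
split; do ![apply: functional_extensionality => ?]; rewrite /sc_adj /sc_id /sc_input ffunE //.
by rewrite /insub_bseq insubdK //; apply: xW.
Qed.

Section Reduction.
Variables (Lg : language (seq bool)) (t : nat).

Definition legalb m (adj : 'I_m -> 'I_m -> bool) (id : 'I_m -> nat) (x : 'I_m -> seq bool) :=
  [&& is_graphb (Graph m adj), injectiveb id & Lg (Config _ (Graph m adj) x)].

Definition view_set m (adj : 'I_m -> 'I_m -> bool) (id : 'I_m -> nat) (x : 'I_m -> seq bool) :=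
  [seq unary (@view_code (Graph m adj) t id x u) | u <- enum 'I_m].

Definition legal_view_sets (W : nat) : seq (seq (seq bool)) :=
  flatten [seq [seq view_set (sc_adj b) (sc_id b) (sc_input b) |
                 b <- enum (small_config W m) & legalb (sc_adj b) (sc_id b) (sc_input b)]
          | m <- iota 0 W.+2].

Definition reduction : algo (seq bool) cont_input := fun G id x v =>
  (unary (view_code t id x v), legal_view_sets (id v + size (x v))).

Lemma reduction_local : local _ _ t reduction.
Proof.
move=> G1 id1 x1 v1 G2 id2 x2 v2 _ _ id1_inj id2_inj SV.
rewrite /reduction (same_view_code id1_inj id2_inj SV).
by have [-> ->] := same_view_center SV.
Qed.

(* Distinct identities bounded by [W] force at most [W.+1] nodes. *)
Lemma view_set_legal W m adj (id : 'I_m -> nat) x : legalb adj id x ->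
  (forall u, id u <= W) -> (forall u, size (x u) <= W) ->
  view_set adj id x \in legal_view_sets W.
Proof.
move=> legal idW xW; have [b [adjE idE xE]] := small_config_of adj idW xW.
subst adj id x.
apply/flattenP; exists [seq view_set (sc_adj b) (sc_id b) (sc_input b) |
                 b <- enum (small_config W m) & legalb (sc_adj b) (sc_id b) (sc_input b)].
  apply/mapP; exists m => //; rewrite mem_iota /= ltnS.
  have [_ /injectiveP id_inj _] := and3P legal; pose idW' u : sc_id b u < W.+1 := idW u.
  have := leq_card (fun u => Ordinal (idW' u)) (fun u w uw => id_inj u w (congr1 val uw)).
  by rewrite !card_ord.
by apply/mapP; exists b; rewrite // mem_filter legal mem_enum.
Qed.

Variable A : algo (seq bool * seq bool) bool.
Arguments A : clear implicits.
Hypothesis A_local : local (seq bool * seq bool) bool t A.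
Hypothesis A_complete : forall C : config (seq bool), is_graph (cgraph C) -> Lg C ->
  exists y : 'I_(gn (cgraph C)) -> seq bool,
    forall id : 'I_(gn (cgraph C)) -> nat, injective id ->
      forall v, A (cgraph C) id (fun u => (cinput C u, y u)) v = true.
Hypothesis A_sound : forall C : config (seq bool), is_graph (cgraph C) -> Lg C = false ->
  forall (y : 'I_(gn (cgraph C)) -> seq bool) (id : 'I_(gn (cgraph C)) -> nat),
    injective id -> exists v, A (cgraph C) id (fun u => (cinput C u, y u)) v = false.

Lemma legal_of_view_codes G (id : 'I_(gn G) -> nat) (x : 'I_(gn G) -> seq bool)
    G' (id' : 'I_(gn G') -> nat) (x' : 'I_(gn G') -> seq bool) :
  is_graph G -> injective id -> is_graph G' -> injective id' -> Lg (Config _ G' x') ->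
  (forall u, exists u', view_code t id x u = view_code t id' x' u') -> Lg (Config _ G x).
Proof.
move=> gG id_inj gG' id'_inj legal' codeE; apply/negPn/negP => /negbTE illegal.
have [y' y'_acc] := A_complete (C := Config _ G' x') gG' legal'.
have [n'_gt0 _ _ _] := gG'; pose g u := odflt (Ordinal n'_gt0) [pick u' | id' u' == id u].
have gE u u' : id' u' = id u -> g u = u'.
  move=> idE; rewrite /g; case: pickP => [z /eqP zE|none] /=.
    by apply: id'_inj; rewrite zE.
  by have := none u'; rewrite idE eqxx.
have [v v_rej] := A_sound (C := Config _ G x) gG illegal (fun u => y' (g u)) id_inj.
have [v' /(same_view_of_code id_inj id'_inj y' gE) SV] := codeE v.
by move: v_rej; rewrite /= (A_local gG gG' id_inj id'_inj SV) y'_acc.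
Qed.

Lemma reduction_complete n adj (id : 'I_n -> nat) (x : 'I_n -> seq bool) :
  is_graph (Graph n adj) -> injective id -> Lg (Config _ (Graph n adj) x) ->
  containment (Config _ (Graph n adj) (@reduction (Graph n adj) id x)).
Proof.
move=> gG id_inj legal; have [n_gt0 _ _ _] := gG.
have [v _ vmax] := arg_maxnP (fun v => id v + size (x v)) (isT : predT (Ordinal n_gt0)).
apply/existsP; exists v; apply/hasP; exists (view_set adj id x); last first.
  by apply/forallP => u; apply: map_f; rewrite mem_enum.
apply: view_set_legal => [|u|u]; last 2 first.
- by apply: leq_trans (vmax u isT); apply: leq_addr.
- by apply: leq_trans (vmax u isT); apply: leq_addl.
by rewrite /legalb legal andbT; apply/andP; split; [apply/is_graphP | apply/injectiveP].
Qed.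

Lemma reduction_sound (C : config (seq bool)) (id : 'I_(gn (cgraph C)) -> nat) :
  is_graph (cgraph C) -> injective id ->
  containment (Config _ (cgraph C) (reduction id (cinput C))) -> Lg C.
Proof.
case: C id => G x id gG id_inj /existsP[v /hasP[S /flattenP[_ /mapP[m _ ->]]]].
case/mapP=> b; rewrite mem_filter => /andP[/and3P[/is_graphP gG' /injectiveP id'_inj legal'] _].
move=> -> /forallP S_views; apply: legal_of_view_codes gG id_inj gG' id'_inj legal' _ => u.
by have /mapP[u' _ /unary_inj codeE] := S_views u; exists u'.
Qed.

End Reduction.

Lemma NLD_reduces_to_containment (Lg : language (seq bool)) :
  NLD_O1 Lg -> local_reduction Lg containment.
Proof.
case=> t [A [A_local A_complete A_sound]]; exists t, (reduction Lg t).
split=> [|[[n adj] x] /= gG id id_inj]; first exact: reduction_local.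
apply/idP/idP; first exact: reduction_complete.
exact: (reduction_sound A_local A_complete A_sound (C := Config _ (Graph n adj) x)).
Qed.

Theorem theorem6 :
  NLD_O1 containment /\
  (forall Lg : language (seq bool), NLD_O1 Lg -> local_reduction Lg containment).
Proof. by split; [exact: containment_NLD | exact: NLD_reduces_to_containment]. Qed.
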